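(* Let $(G,\Sigma)$ be an $n$-vertex signed graph and let $v,w$ be non-adjacent vertices of $G$ with degrees $d_1,d_2$, such that $N^-(v)=\emptyset$ and $N^-(w)\subseteq N(v)\cap N(w)$. Set $V_1=N^+(v)\setminus N(w)$, $V_2=N^+(w)\setminus N(v)$, $V_3=N^+(v)\cap N^+(w)$, $V_4=N^+(v)\cap N^-(w)$, $V_5=V(G)\setminus(N(v)\cup N(w)\cup\{v,w\})$, and order the vertices as $v,w,V_1,V_2,V_3,V_4,V_5$. Suppose spectral integral variation of type 2 occurs under the addition of an even edge $vw$, increasing the eigenvalues $\lambda_1,\lambda_2$ of $L(G,\Sigma)$ by $1$, and that there is an orthogonal basis $v_1,\dots,v_n$ of eigenvectors of $L(G,\Sigma)$ such that: (1) for $i\in\{1,2\}$, $v_i$ is a $\lambda_i$-eigenvector with first two entries $a_i,b_i$ satisfying $(a_i-b_i)^2/\|v_i\|^2=1+1/(\lambda_{3-i}-\lambda_i)$; (2) for $j\in\{3,\dots,n\}$ the first two entries of $v_j$ are equal; and (3) for $i\in\{1,2\}$, the vector obtained from $v_i$ by deleting its first two entries equals $x_2-x_1$, where $x_1,x_2$ are the first and second columns of $L(G,\Sigma)$ with their first two entries deleted (i.e. it equals $\mathbf{1}$ on $V_1$, $-\mathbf{1}$ on $V_2$, $\mathbf{0}$ on $V_3$, $2\cdot\mathbf{1}$ on $V_4$, $\mathbf{0}$ on $V_5$). Then for each $i\in\{1,2\}$, $a_i=-\lambda_i+d_2+1$ and $b_i=\lambda_i-d_1-1$.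
   Context: All graphs are finite and simple. A signed graph is a pair $(G,\Sigma)$ with $\Sigma\subseteq E(G)$; edges in $\Sigma$ are odd, the others even. $N^-(u)$ (resp. $N^+(u)$) is the set of neighbors joined to $u$ by an odd (resp. even) edge, and $N(u)=N^-(u)\cup N^+(u)$. The signed Laplacian is $L(G,\Sigma)=D(G)-A(G,\Sigma)$, $D(G)$ the diagonal degree matrix, $A(G,\Sigma)$ having $(i,j)$-entry $1$ for an even edge, $-1$ for an odd edge, $0$ otherwise. Adding an even edge $vw$ means passing from $L(G,\Sigma)$ to $L(G+vw,\Sigma)$. Spectral integral variation of type 2 means the multiset of eigenvalues of $L(G+vw,\Sigma)$ is obtained from that of $L(G,\Sigma)$ by increasing two eigenvalues (counted with multiplicity) by $1$ each. *)

From HB Require Import structures.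
From mathcomp Require Import all_boot all_order all_algebra.
Set Implicit Arguments. Unset Strict Implicit. Unset Printing Implicit Defensive.
Import Order.TTheory GRing.Theory Num.Theory.
Local Open Scope ring_scope.

(* A signed graph on the vertex set 'I_n: [e] is the (simple) edge relation
   and [sg] marks the odd edges (Sigma); see [signed_graph]. *)
Definition signed_graph (n : nat) (e sg : rel 'I_n) : Prop :=
  [/\ irreflexive e, symmetric e, symmetric sg & subrel sg e].

Definition nbhd n (e : rel 'I_n) (u : 'I_n) : {set 'I_n} := [set x | e u x].
Definition nbhd_odd n (e sg : rel 'I_n) (u : 'I_n) : {set 'I_n} :=
  [set x | e u x && sg u x].
Definition nbhd_even n (e sg : rel 'I_n) (u : 'I_n) : {set 'I_n} :=
  [set x | e u x && ~~ sg u x].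

Definition deg n (e : rel 'I_n) (u : 'I_n) : nat := #|nbhd e u|.

Definition sadj (R : ringType) n (e sg : rel 'I_n) : 'M[R]_n :=
  \matrix_(i, j) (if e i j then (if sg i j then -1 else 1) else 0).
Definition degmx (R : ringType) n (e : rel 'I_n) : 'M[R]_n :=
  \matrix_(i, j) (if i == j then (deg e i)%:R else 0).
Definition slap (R : ringType) n (e sg : rel 'I_n) : 'M[R]_n :=
  degmx R e - sadj R e sg.

Definition add_edge n (e : rel 'I_n) (v w : 'I_n) : rel 'I_n :=
  fun x y => [|| e x y, (x == v) && (y == w) | (x == w) && (y == v)].

(* Spectral integral variation of type 2 when adding the even edge vw,
   increasing the eigenvalues lam1, lam2 (counted with multiplicity):
   the eigenvalue multiset of L(G,Sigma) is {lam1, lam2} + s and that of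
   L(G+vw,Sigma) is {lam1+1, lam2+1} + s (multisets of eigenvalues are
   the root multisets of the characteristic polynomials). *)
Definition siv_type2 (R : comRingType) n (e sg : rel 'I_n) (v w : 'I_n)
    (lam1 lam2 : R) : Prop :=
  exists s : seq R,
    char_poly (slap R e sg) =
      ('X - lam1%:P) * ('X - lam2%:P) * \prod_(x <- s) ('X - x%:P) /\
    char_poly (slap R (add_edge e v w) sg) =
      ('X - (lam1 + 1)%:P) * ('X - (lam2 + 1)%:P) * \prod_(x <- s) ('X - x%:P).

Definition dotv (R : ringType) n (x y : 'cV[R]_n) : R :=
  \sum_(k < n) x k 0 * y k 0.
Definition sqnorm (R : ringType) n (x : 'cV[R]_n) : R := dotv x x.

From HB Require Import structures.
From mathcomp Require Import all_boot all_order all_algebra.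
From mathcomp Require Import ring lra.
Set Implicit Arguments. Unset Strict Implicit. Unset Printing Implicit Defensive.
Import Order.TTheory GRing.Theory Num.Theory.
Local Open Scope ring_scope.

(* The vector e_v - e_w is orthogonal to every v_j with j >= 3, so it lies in
   the span of v_1 and v_2: e_v - e_w = c_1 v_1 + c_2 v_2.  Applying
   L - lam_2 (resp. L - lam_1) isolates v_1 (resp. v_2); comparing entries
   off {v, w}, where v_1 and v_2 agree with x_2 - x_1 and e_v - e_w vanishes,
   forces c_1 (lam_1 - lam_2) = -1 = c_2 (lam_2 - lam_1) as soon as
   x_2 - x_1 != 0.  The entries at v and w then give a_1 = lam_2 - d_1,
   b_1 = d_2 - lam_2, a_2 = lam_1 - d_1, b_2 = d_2 - lam_1, and the
   normalisation (1) yields lam_1 + lam_2 = d_1 + d_2 + 1.  If x_2 - x_1 = 0,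
   both v_i are supported on {v, w}, where L acts diagonally, so
   lam_1 = d_1 = lam_2. *)

Lemma big_supp2 (R : pzSemiRingType) n (v w : 'I_n) (f g : 'I_n -> R) :
  v != w -> (forall k, k != v -> k != w -> g k = 0) ->
  \sum_k f k * g k = f v * g v + f w * g w.
Proof.
move=> vw g0; rewrite (bigD1 v) //= (bigD1 w) 1?eq_sym //=.
by rewrite big1 ?addr0 // => k /andP[kv kw]; rewrite g0 ?mulr0.
Qed.

Lemma dotvE (R : nzRingType) n (x y : 'cV[R]_n) : dotv x y = (x^T *m y) 0 0.
Proof. by rewrite mxE; apply: eq_bigr => k _; rewrite mxE. Qed.

Lemma sqnorm_eq0 (R : realDomainType) n (x : 'cV[R]_n) :
  (sqnorm x == 0) = (x == 0).
Proof.
apply/eqP/eqP => [x0 | ->]; last first.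
  by rewrite /sqnorm /dotv big1 // => k _; rewrite mxE mul0r.
have sq0 := psumr_eq0P (fun k _ => sqr_ge0 (x k 0)) x0.
by apply/matrixP => k i; rewrite (ord1 i) mxE; apply/eqP; rewrite -sqrf_eq0 sq0.
Qed.

Lemma orthogonal_basis_expansion (R : fieldType) n
    (V : 'I_n -> 'cV[R]_n) (y : 'cV[R]_n) :
  (forall j, sqnorm (V j) != 0) ->
  (forall j k, j != k -> dotv (V j) (V k) = 0) ->
  row_free (\matrix_(j < n) (V j)^T) ->
  y = \sum_j (dotv (V j) y / sqnorm (V j)) *: V j.
Proof.
move=> V0 orth; rewrite row_free_unit => Mu.
set M := \matrix_(j < n) (V j)^T; set s := \sum_j _.
have rowE z j : (M *m z) j 0 = dotv (V j) z.
  by rewrite mxE; apply: eq_bigr => k _; rewrite !mxE.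
suff M0 : M *m (y - s) = 0.
  by apply/eqP; rewrite -subr_eq0 -(mulKmx Mu (y - s)) M0 mulmx0.
apply/matrixP => j i; rewrite (ord1 i) mulmxBr mulmx_sumr.
rewrite [LHS]mxE [X in _ + X]mxE summxE rowE (bigD1 j) //= big1 => [|k kj].
  by rewrite -scalemxAr mxE rowE mulfVK // addr0 mxE subrr.
by rewrite -scalemxAr mxE rowE orth ?mulr0 // eq_sym.
Qed.

Lemma orthogonal_basis_expansion2 (R : fieldType) n
    (V : 'I_n -> 'cV[R]_n) (y : 'cV[R]_n) (p1 p2 : 'I_n) :
  p1 != p2 -> (forall j, sqnorm (V j) != 0) ->
  (forall j k, j != k -> dotv (V j) (V k) = 0) ->
  row_free (\matrix_(j < n) (V j)^T) ->
  (forall j, j != p1 -> j != p2 -> dotv (V j) y = 0) ->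
  y = (dotv (V p1) y / sqnorm (V p1)) *: V p1
      + (dotv (V p2) y / sqnorm (V p2)) *: V p2.
Proof.
move=> p12 V0 orth rf y_orth.
rewrite {1}(orthogonal_basis_expansion y V0 orth rf) (bigD1 p1) //=.
rewrite (bigD1 p2) 1?eq_sym //= big1 ?addr0 // => j /andP[jp2 jp1].
by rewrite y_orth // mul0r scale0r.
Qed.

Definition edge_vec (R : nzRingType) n (v w : 'I_n) : 'cV[R]_n :=
  delta_mx v 0 - delta_mx w 0.

Section EdgeVector.
Variables (R : nzRingType) (n : nat) (v w : 'I_n).

Lemma edge_vecE k : edge_vec R v w k 0 = (k == v)%:R - (k == w)%:R.
Proof. by rewrite !mxE !andbT. Qed.

Lemma mulmx_edge_vec m (A : 'M[R]_(m, n)) k :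
  (A *m edge_vec R v w) k 0 = A k v - A k w.
Proof. by rewrite mulmxBr -!colE !mxE. Qed.

Lemma dotv_edge_vec (x : 'cV[R]_n) :
  dotv x (edge_vec R v w) = x v 0 - x w 0.
Proof. by rewrite dotvE mulmx_edge_vec !mxE. Qed.

End EdgeVector.

Section NonadjacentPair.
Variables (R : realFieldType) (n : nat) (L : 'M[R]_n) (v w : 'I_n).
Hypotheses (vw : v != w) (Lvw : L v w = 0) (Lwv : L w v = 0).

Lemma eigen_edge_vec_entries (x y : 'cV[R]_n) (l m c c' : R) (u : 'I_n) :
  L *m x = l *: x -> L *m y = m *: y -> edge_vec R v w = c *: x + c' *: y ->
  u != v -> u != w -> x u 0 = L u w - L u v -> x u 0 != 0 ->
  [/\ c * (l - m) = -1, x v 0 = m - L v v & x w 0 = L w w - m].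
Proof.
move=> Ex Ey evE uv uw xu xu0.
have entry k : L k v - L k w - m * edge_vec R v w k 0 = c * (l - m) * x k 0.
  by rewrite -mulmx_edge_vec evE mulmxDr -!scalemxAr Ex Ey !mxE; ring.
have := entry u; have := entry v; have := entry w.
rewrite !edge_vecE !eqxx eq_sym (negbTE vw) (negbTE uv) (negbTE uw) Lvw Lwv /=.
rewrite xu in xu0 *; move=> ew ev eu.
have cE : c * (l - m) = -1 by apply: (mulIf xu0); rewrite -eu; ring.
by rewrite cE in ev ew; split=> //; lra.
Qed.

Lemma sqnorm_supp2 (x : 'cV[R]_n) :
  (forall u, u != v -> u != w -> x u 0 = 0) ->
  sqnorm x = x v 0 ^+ 2 + x w 0 ^+ 2.
Proof. by move=> x0; rewrite /sqnorm /dotv (big_supp2 _ vw x0). Qed.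

Lemma supp2_eigenvalue (x : 'cV[R]_n) (l : R) :
  L *m x = l *: x -> (forall u, u != v -> u != w -> x u 0 = 0) ->
  x v 0 != 0 -> l = L v v.
Proof.
move=> Ex x0 xv0; have /matrixP/(_ v 0) := Ex.
rewrite !mxE (big_supp2 _ vw x0) Lvw mul0r addr0 => xvE.
by apply: (mulIf xv0); rewrite xvE.
Qed.

Lemma normalised_supp2_entry_neq0 (x : 'cV[R]_n) (l m : R) :
  l != m -> x != 0 -> (forall u, u != v -> u != w -> x u 0 = 0) ->
  (x v 0 - x w 0) ^+ 2 / sqnorm x = 1 + (m - l)^-1 -> x v 0 != 0.
Proof.
move=> lm x_neq0 x0 xnorm; apply/eqP => xv0; move: xnorm.
have : sqnorm x != 0 by rewrite sqnorm_eq0.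
rewrite sqnorm_supp2 // xv0 sub0r sqrrN expr0n add0r => /divff ->.
rewrite -[X in X = _]addr0 => /addrI/esym/eqP.
by rewrite invr_eq0 subr_eq0 eq_sym (negbTE lm).
Qed.

End NonadjacentPair.

Lemma eigenvalue_sum (R : fieldType) (c l1 l2 d1 d2 : R) :
  l1 != l2 -> c * (l1 - l2) = -1 ->
  c * ((l2 - d1) - (d2 - l2)) = 1 + (l2 - l1)^-1 -> l1 + l2 = d1 + d2 + 1.
Proof.
move=> l12 cl12 cnorm.
have l21 : l2 - l1 != 0 by rewrite subr_eq0 eq_sym.
have cE : c = (l2 - l1)^-1.
  by apply: (mulIf l21); rewrite mulVf // -opprB mulrN cl12 opprK.
have : (l2 - d1) - (d2 - l2) = (l2 - l1) + 1.
  by rewrite -[LHS](mulVKf l21) -cE cnorm mulrDr mulr1 mulfV.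
have -> : l1 + l2 = d1 + d2 + 1 + ((l2 - d1) - (d2 - l2) - (l2 - l1 + 1)).
  by ring.
by move=> ->; rewrite subrr addr0.
Qed.

Lemma slap_diag (R : nzRingType) n (e sg : rel 'I_n) u :
  irreflexive e -> slap R e sg u u = (deg e u)%:R.
Proof. by move=> irr; rewrite !mxE eqxx irr subr0. Qed.

Lemma slap_nonedge (R : nzRingType) n (e sg : rel 'I_n) u u' :
  u != u' -> ~~ e u u' -> slap R e sg u u' = 0.
Proof. by move=> uu' euu'; rewrite !mxE (negbTE uu') (negbTE euu') subr0. Qed.

Theorem lemma2p7 (R : realFieldType) (n : nat) (e sg : rel 'I_n)
  (v w : 'I_n) (p1 p2 : 'I_n) (lam1 lam2 : R) (V : 'I_n -> 'cV[R]_n) :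
  signed_graph e sg ->
  v != w -> ~~ e v w ->
  nbhd_odd e sg v = set0 ->
  nbhd_odd e sg w \subset nbhd e v :&: nbhd e w ->
  siv_type2 e sg v w lam1 lam2 ->
  lam1 != lam2 ->
  (* v_1, ..., v_n : an orthogonal basis of eigenvectors of L(G,Sigma);
     p1, p2 are the indices of v_1, v_2 *)
  p1 != p2 ->
  (forall j, V j != 0) ->
  (forall j k, j != k -> dotv (V j) (V k) = 0) ->
  row_free (\matrix_(j < n) (V j)^T) ->
  (forall j, exists mu : R, slap R e sg *m V j = mu *: V j) ->
  (* (1) *)
  slap R e sg *m V p1 = lam1 *: V p1 ->
  slap R e sg *m V p2 = lam2 *: V p2 ->
  (V p1 v 0 - V p1 w 0) ^+ 2 / sqnorm (V p1) = 1 + (lam2 - lam1)^-1 ->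
  (V p2 v 0 - V p2 w 0) ^+ 2 / sqnorm (V p2) = 1 + (lam1 - lam2)^-1 ->
  (* (2) *)
  (forall j, j != p1 -> j != p2 -> V j v 0 = V j w 0) ->
  (* (3): outside v, w the entries of v_i are those of x_2 - x_1 *)
  (forall u, u != v -> u != w ->
     V p1 u 0 = slap R e sg u w - slap R e sg u v) ->
  (forall u, u != v -> u != w ->
     V p2 u 0 = slap R e sg u w - slap R e sg u v) ->
  [/\ V p1 v 0 = - lam1 + (deg e w)%:R + 1,
      V p1 w 0 = lam1 - (deg e v)%:R - 1,
      V p2 v 0 = - lam2 + (deg e w)%:R + 1
    & V p2 w 0 = lam2 - (deg e v)%:R - 1].
Proof.
move=> [irr sym _ _] vw nevw _ _ _ l12 p12 V0 orth rf _ E1 E2 H1 H2 C3 X1 X2.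
set L := slap R e sg in E1 E2 X1 X2 *.
have Lvw : L v w = 0 by rewrite slap_nonedge.
have Lwv : L w v = 0 by rewrite slap_nonedge 1?eq_sym 1?sym.
set c := fun j => dotv (V j) (edge_vec R v w) / sqnorm (V j).
have evE : edge_vec R v w = c p1 *: V p1 + c p2 *: V p2.
  apply: orthogonal_basis_expansion2 => // [j | j jp1 jp2].
    by rewrite sqnorm_eq0.
  by rewrite dotv_edge_vec C3 // subrr.
case: (boolP [exists u, [&& u != v, u != w & V p1 u 0 != 0]]).
  move=> /existsP[u /and3P[uv uw xu0]].
  have [c1E a1E b1E] :=
    eigen_edge_vec_entries vw Lvw Lwv E1 E2 evE uv uw (X1 u uv uw) xu0.
  have yu0 : V p2 u 0 != 0 by rewrite X2 // -X1.
  rewrite addrC in evE.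
  have [_ a2E b2E] :=
    eigen_edge_vec_entries vw Lvw Lwv E2 E1 evE uv uw (X2 u uv uw) yu0.
  have norm1 : c p1 * (V p1 v 0 - V p1 w 0) = 1 + (lam2 - lam1)^-1.
    by rewrite /c dotv_edge_vec mulrAC -expr2.
  rewrite a1E b1E in norm1.
  have := eigenvalue_sum l12 c1E norm1.
  by rewrite a1E b1E a2E b2E !slap_diag //; split; lra.
move=> /existsPn tail0.
have z1 u : u != v -> u != w -> V p1 u 0 = 0.
  by move=> uv uw; apply/eqP; move: (tail0 u); rewrite uv uw negbK.
have z2 u : u != v -> u != w -> V p2 u 0 = 0.
  by move=> uv uw; rewrite X2 // -X1 // z1.
have l21 : lam2 != lam1 by rewrite eq_sym.
have lam1E := supp2_eigenvalue vw Lvw E1 z1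
  (normalised_supp2_entry_neq0 vw l12 (V0 p1) z1 H1).
have lam2E := supp2_eigenvalue vw Lvw E2 z2
  (normalised_supp2_entry_neq0 vw l21 (V0 p2) z2 H2).
by move: l12; rewrite lam1E lam2E eqxx.
Qed.
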